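(* Let $n\ge 1$ and $k\ge 0$ be integers, and let $C_n=\{v_0,\dots,v_{n-1}\}$ with metric $d(v_i,v_j)=\min\{|i-j|,n-|i-j|\}$. For indices taken modulo $n$, put $\sigma_i=\{v_i,v_{i+1},\dots,v_{i+k}\}$, $\sigma_i'=\{v_i,v_{i+k},v_{i+2k}\}$ and $\sigma_i''=\{v_i,v_{i+k},v_{i+2k-1},v_{i+2k}\}$. Then the set of maximal simplices of $\mathrm{VR}(C_n;k)$ is $\{\sigma_i: 0\le i\le n-1\}$ if $n>3k$; $\{\sigma_i: 0\le i\le n-1\}\cup\{\sigma_i': 0\le i\le n-1\}$ if $n=3k$ and $k\ge 2$; $\{\sigma_i: 0\le i\le n-1\}\cup\{\sigma_i'': 0\le i\le n-1\}$ if $n=3k-1$ and $k\ge 3$.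
   Context: $\mathrm{VR}(X;r)$ is the simplicial complex on vertex set $X$ whose simplices are the finite nonempty subsets of diameter at most $r$; a maximal simplex is one not properly contained in another simplex. *)

From mathcomp Require Import all_boot all_order.
Set Implicit Arguments. Unset Strict Implicit. Unset Printing Implicit Defensive.

Definition cdist (n i j : nat) : nat :=
  let a := if i <= j then j - i else i - j in minn a (n - a).

Definition vr_simplex (n k : nat) (s : {set 'I_n}) : bool :=
  (s != set0) && [forall x in s, forall y in s, cdist n x y <= k].

Definition vr_maximal (n k : nat) (s : {set 'I_n}) : bool :=
  vr_simplex k s && [forall t : {set 'I_n}, (s \proper t) ==> ~~ vr_simplex k t].

Definition sigma (n k i : nat) : {set 'I_n} :=
  [set x : 'I_n | [exists t : 'I_k.+1, (x : nat) == (i + t) %% n]].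

Definition sigma' (n k i : nat) : {set 'I_n} :=
  [set x : 'I_n | [|| (x : nat) == i %% n, (x : nat) == (i + k) %% n
                    | (x : nat) == (i + 2 * k) %% n]].

Definition sigma'' (n k i : nat) : {set 'I_n} :=
  [set x : 'I_n | [|| (x : nat) == i %% n, (x : nat) == (i + k) %% n,
                    (x : nat) == (i + 2 * k - 1) %% n
                  | (x : nat) == (i + 2 * k) %% n]].

From mathcomp Require Import all_boot all_order.
From mathcomp Require Import zify.
Set Implicit Arguments. Unset Strict Implicit. Unset Printing Implicit Defensive.

(* Work with offsets [(w - c) mod n] from a base vertex [c].  A simplex [s] lies
   within distance [k] of any of its vertices [x]; with the base chosen so that [x]
   has offset [k], all of [s] has offsets in [0 .. 2k], say between the extreme
   offsets [a <= b].  If [b - a <= k], then [s] is inside a [sigma_i].  Otherwise the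
   two extreme vertices are close only the long way round the cycle, so
   [n - (b - a) <= k]: this is impossible when [n > 3k], and when [n = 3k] or
   [n = 3k - 1] it pins down [a] and [b]; comparing every other vertex with both
   extremes leaves only the vertices of a [sigma'_i], resp. a [sigma''_i].
   Conversely each of these sets is maximal, since every vertex outside it is
   farther than [k] from one of its points. *)

Section Offsets.
Variable n : nat.

Definition offset (c w : nat) : nat := if c <= w then w - c else w + n - c.

Lemma offset_cases c w :
  (c <= w /\ offset c w = w - c) \/ (w < c /\ offset c w = w + n - c).
Proof. by rewrite /offset; case: leqP => h; [left | right]. Qed.

Lemma offset_lt c w : c < n -> w < n -> offset c w < n.
Proof. by move=> *; have := offset_cases c w; lia. Qed.

Lemma offset_spec c w : c < n -> w < n ->
  offset c w < n /\ (offset c w + c = w \/ offset c w + c = w + n).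
Proof. by move=> *; have := offset_cases c w; lia. Qed.

Lemma offset_offset c i w : c < n -> i < n -> w < n ->
  offset i w = offset (offset c i) (offset c w).
Proof.
move=> *; have := offset_cases c i; have := offset_cases c w.
by have := offset_cases i w; have := offset_cases (offset c i) (offset c w); lia.
Qed.

Lemma offset_eq_mod i j w : 0 < n -> i < n -> j < n -> w < n ->
  (w == (i + j) %% n) = (offset i w == j).
Proof.
move=> hn hi hj hw.
have -> : (i + j) %% n = if i + j < n then i + j else i + j - n.
  case: ltnP => h; first by rewrite modn_small.
  by rewrite -{1}(subnK h) modnDr modn_small //; lia.
by apply/eqP/eqP; have := offset_cases i w; case: (ltnP (i + j) n) => h /=; lia.
Qed.

Lemma offset_mod i j : 0 < n -> i < n -> j < n -> offset i ((i + j) %% n) = j.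
Proof. by move=> hn hi hj; apply/eqP; rewrite -offset_eq_mod ?ltn_pmod. Qed.

Lemma cdist_leP a b k : cdist n a b <= k <->
  (a <= b /\ (b - a <= k \/ n - (b - a) <= k)) \/
  (b < a /\ (a - b <= k \/ n - (a - b) <= k)).
Proof. by rewrite /cdist; case: leqP => h; rewrite geq_min; lia. Qed.

Lemma cdist_sym a b : cdist n a b = cdist n b a.
Proof. by rewrite /cdist; case: (ltngtP a b) => h; rewrite ?(ltnW h) ?leqNgt ?h // h leqnn. Qed.

Lemma cdist_le_ordered a b k : a <= b ->
  cdist n a b <= k <-> b <= a + k \/ a + n <= b + k.
Proof. by move=> h; rewrite cdist_leP; lia. Qed.

Lemma cdist_offset c w w' k : c < n -> w < n -> w' < n ->
  cdist n w w' <= k <-> cdist n (offset c w) (offset c w') <= k.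
Proof.
move=> *; rewrite !cdist_leP.
case: (offset_cases c w) => [[? ->]|[? ->]];
  case: (offset_cases c w') => [[? ->]|[? ->]];
  split=> [[[? [?|?]]|[? [?|?]]]|[[? [?|?]]|[? [?|?]]]]; lia.
Qed.

End Offsets.

Definition sigma'_offsets (k : nat) : pred nat :=
  fun m => [|| m == 0, m == k | m == 2 * k].

Definition sigma''_offsets (k : nat) : pred nat :=
  fun m => [|| m == 0, m == k, m == 2 * k - 1 | m == 2 * k].

Section Cycle.
Variables (n : nat) (hn : 0 < n).

Lemma mem_sigma k i (w : 'I_n) : i < n -> k < n ->
  (w \in sigma n k i) = (offset n i w <= k).
Proof.
move=> hi hk; rewrite inE; apply/existsP/idP => [[t /eqP E] | h].
  have ht : t < n by have := ltn_ord t; lia.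
  by move: E => /eqP; rewrite offset_eq_mod // => /eqP ->; rewrite -ltnS.
exists (Ordinal (h : offset n i w < k.+1)) => /=.
by rewrite offset_eq_mod // offset_lt.
Qed.

Lemma mem_sigma' k i (w : 'I_n) : i < n -> 2 * k < n ->
  (w \in sigma' n k i) = sigma'_offsets k (offset n i w).
Proof.
move=> hi hk; have hw := ltn_ord w.
by rewrite inE /sigma'_offsets -{1}(addn0 i) !offset_eq_mod //; lia.
Qed.

Lemma mem_sigma'' k i (w : 'I_n) : i < n -> 2 * k < n -> 0 < k ->
  (w \in sigma'' n k i) = sigma''_offsets k (offset n i w).
Proof.
move=> hi hk hk0; have hw := ltn_ord w; rewrite inE.
have -> : i + 2 * k - 1 = i + (2 * k - 1) by lia.
by rewrite /sigma''_offsets -{1}(addn0 i) !offset_eq_mod //; lia.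
Qed.

Lemma simplexP k (s : {set 'I_n}) : vr_simplex k s <->
  (exists w, w \in s) /\ (forall x y, x \in s -> y \in s -> cdist n x y <= k).
Proof.
split=> [/andP [/set0Pn [w ws] /forallP H] | [[w ws] H]].
  split=> [|x y xs ys]; first by exists w.
  by move/implyP/(_ xs)/forallP/(_ y)/implyP/(_ ys): (H x).
apply/andP; split; first by apply/set0Pn; exists w.
by apply/forallP => x; apply/implyP => xs; apply/forallP => y; apply/implyP; apply: H.
Qed.

Lemma maximalP k (s : {set 'I_n}) : vr_maximal k s <->
  vr_simplex k s /\ (forall t : {set 'I_n}, s \proper t -> ~ vr_simplex k t).
Proof.
split=> [/andP [ss /forallP H] | [ss H]].
  by split=> // t st; apply/negP; apply: (implyP (H t)).
by apply/andP; split=> //; apply/forallP => t; apply/implyP => st; apply/negP; apply: H.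
Qed.

Lemma maximal_subset_eq k (s t : {set 'I_n}) :
  vr_maximal k s -> vr_simplex k t -> s \subset t -> s = t.
Proof.
move=> /maximalP [_ smax] ts st; apply/eqP; apply: contraT => ne.
by case: (smax t); rewrite // properEneq ne.
Qed.

Lemma maximal_of_offsets k i (M : {set 'I_n}) (Q : pred nat) : i < n ->
  (forall w : 'I_n, (w \in M) = Q (offset n i w)) ->
  Q 0 ->
  (forall a b, a < n -> b < n -> Q a -> Q b -> cdist n a b <= k) ->
  (forall m, m < n -> ~~ Q m -> ~ (forall j, j < n -> Q j -> cdist n m j <= k)) ->
  vr_maximal k M.
Proof.
move=> hi HM Q0 Qdiam Qmax.
have ord_offset j : j < n -> Q j -> Ordinal (ltn_pmod (i + j) hn) \in M.
  by move=> hj Qj; rewrite HM /= offset_mod.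
apply/maximalP; split.
  apply/simplexP; split; first by exists (Ordinal (ltn_pmod (i + 0) hn)); apply: ord_offset.
  move=> x y; rewrite !HM => Qx Qy; apply/(cdist_offset k hi (ltn_ord x) (ltn_ord y)).
  by apply: Qdiam; rewrite // offset_lt.
move=> t /properP [Mt [w wt wM]] /simplexP [_ tdiam].
apply: (Qmax (offset n i w)); first by rewrite offset_lt.
  by rewrite -HM.
move=> j hj Qj; have := tdiam _ _ wt (subsetP Mt _ (ord_offset j hj Qj)).
by move/(cdist_offset k hi (ltn_ord w) (ltn_ord _)); rewrite /= offset_mod.
Qed.

Lemma sigma_maximal k i : i < n -> 3 * k <= n + 1 -> (k = 0 \/ 2 * k + 1 < n) ->
  vr_maximal k (sigma n k i).
Proof.
move=> hi hn3 hk; have kn : k < n by lia.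
apply: (@maximal_of_offsets k i _ (fun m => m <= k)) => //.
- by move=> w; apply: mem_sigma.
- by move=> a b ha hb Qa Qb; apply/cdist_leP; lia.
move=> m hm; rewrite -ltnNge => km H.
have near j : j <= k -> m <= j + k \/ j + n <= m + k.
  by move=> jk; rewrite -cdist_le_ordered 1?cdist_sym; [apply: H | lia]; lia.
have := near 0 (leq0n k); have := near k (leqnn k).
case: (posnP k) => [-> | k0]; first lia.
by have := near 1 k0; have := near (k - 1) (leq_subr 1 k); lia.
Qed.

Lemma sigma'_maximal k i : i < n -> n = 3 * k -> vr_maximal k (sigma' n k i).
Proof.
move=> hi n3k; have kn : 2 * k < n by lia.
apply: (@maximal_of_offsets k i _ (sigma'_offsets k)) => //.
- by move=> w; apply: mem_sigma'.
- by move=> a b ha hb; rewrite /sigma'_offsets => Qa Qb; apply/cdist_leP; lia.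
move=> m hm; rewrite /sigma'_offsets => Qm H.
case: (ltngtP m k) => [mk | km | mk]; last by rewrite mk eqxx orbT in Qm.
  by have := H (2 * k) ltac:(lia) ltac:(lia); rewrite cdist_leP; lia.
case: (ltngtP m (2 * k)) => [m2k | m2k | m2k]; last by rewrite m2k eqxx !orbT in Qm.
  by have := H 0 hn isT; rewrite cdist_leP; lia.
by have := H k ltac:(lia) ltac:(lia); rewrite cdist_leP; lia.
Qed.

Lemma sigma''_maximal k i : i < n -> n = 3 * k - 1 -> 3 <= k ->
  vr_maximal k (sigma'' n k i).
Proof.
move=> hi n3k k3; have kn : 2 * k < n by lia.
apply: (@maximal_of_offsets k i _ (sigma''_offsets k)) => //.
- by move=> w; apply: mem_sigma''; lia.
- by move=> a b ha hb; rewrite /sigma''_offsets => Qa Qb; apply/cdist_leP; lia.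
move=> m hm; rewrite /sigma''_offsets => Qm H.
case: (ltngtP m k) => [mk | km | mk]; last by rewrite mk eqxx orbT in Qm.
  have := H (2 * k - 1) ltac:(lia) ltac:(lia); have := H (2 * k) ltac:(lia) ltac:(lia).
  by rewrite !cdist_leP; lia.
case: (ltnP m (2 * k - 1)) => m2k.
  by have := H 0 hn isT; rewrite cdist_leP; lia.
by have := H k ltac:(lia) ltac:(lia); rewrite cdist_leP; lia.
Qed.

End Cycle.

Record window n k (s : {set 'I_n}) (c : nat) (x z y : 'I_n) : Prop := Window {
  window_base : c < n;
  window_x : x \in s;
  window_z : z \in s;
  window_y : y \in s;
  window_offset_x : offset n c x = k;
  window_range : forall w, w \in s -> offset n c z <= offset n c w <= offset n c y }.

Lemma simplex_window n k (s : {set 'I_n}) : k < n -> vr_simplex k s ->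
  exists c (x z y : 'I_n), window k s c x z y.
Proof.
move=> kn /simplexP [[x xs] _].
set c := offset n k x.
have [z zs zmin] := arg_minnP (fun w : 'I_n => offset n c w) xs.
have [y ys ymax] := arg_maxnP (fun w : 'I_n => offset n c w) xs.
exists c, x, z, y; split=> //.
- by rewrite offset_lt.
- by have := ltn_ord x; have := offset_cases n k x; have := offset_cases n c x; lia.
- by move=> w ws; apply/andP; split; [apply: zmin | apply: ymax].
Qed.

Section Window.
Variables (n k c : nat) (s : {set 'I_n}) (x z y : 'I_n).
Hypotheses (hs : vr_simplex k s) (hw : window k s c x z y).

Local Notation o := (offset n c).

Let n_gt0 : 0 < n := leq_ltn_trans (leq0n c) (window_base hw).

Lemma window_close u v : u \in s -> v \in s -> o u <= o v ->
  o v <= o u + k \/ o u + n <= o v + k.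
Proof.
move=> us vs uv; rewrite -cdist_le_ordered // -cdist_offset ?ltn_ord ?(window_base hw) //.
by case/simplexP: hs => _; apply.
Qed.

Lemma window_mem w : w \in s -> [/\ o z <= o w <= o y, o w < n,
  o w <= o z + k \/ o z + n <= o w + k & o y <= o w + k \/ o w + n <= o y + k].
Proof.
case: hw => hc _ zs ys _ range ws; have /andP [zw wy] := range w ws.
by split; rewrite ?zw ?offset_lt ?ltn_ord //; apply: window_close.
Qed.

Lemma window_bounds : [/\ o z <= k, k <= o y & o y <= 2 * k].
Proof.
have [/andP [zx xy] _ _ xy_close] := window_mem (window_x hw).
have [_ yn _ _] := window_mem (window_y hw).
by move: zx xy xy_close; rewrite (window_offset_x hw); split; lia.
Qed.

Lemma window_wrap : o z + k < o y -> o z + n <= o y + k.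
Proof. by have [_ _ zy _] := window_mem (window_y hw); lia. Qed.

Lemma window_sub (M : {set 'I_n}) (Q : pred nat) (i : 'I_n) :
  (forall w : 'I_n, (w \in M) = Q (offset n i w)) ->
  (* [m] is the offset from [v_i] to [w], written without subtraction. *)
  (forall w, w \in s -> forall m, m < n -> m + o i = o w \/ m + o i = o w + n -> Q m) ->
  s \subset M.
Proof.
move=> HM HQ; apply/subsetP => w ws; have hc := window_base hw.
rewrite HM (offset_offset hc (ltn_ord i) (ltn_ord w)).
have [mn mspec] := offset_spec (offset_lt hc (ltn_ord i)) (offset_lt hc (ltn_ord w)).
exact: HQ w ws _ mn mspec.
Qed.

Lemma window_sub_sigma : k < n -> o y <= o z + k -> s \subset sigma n k z.
Proof.
move=> kn span; apply: (window_sub (Q := fun m => m <= k)) => [w | w ws m mn].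
  by rewrite (mem_sigma n_gt0) ?ltn_ord.
by have [/andP [zw wy] _ _ _] := window_mem ws; lia.
Qed.

Lemma window_sub_sigma' : n = 3 * k -> o z + k < o y -> s \subset sigma' n k z.
Proof.
move=> n3k wrap; have := window_wrap wrap; have [zk ky y2k] := window_bounds.
move=> {}wrap; have [z0 {}y2k] : o z = 0 /\ o y = 2 * k by lia.
apply: window_sub => [w | w ws m mn]; first by rewrite (mem_sigma' n_gt0) ?ltn_ord //; lia.
have [/andP [zw wy] _ zw' wy'] := window_mem ws.
by move: zw wy zw' wy'; rewrite /sigma'_offsets z0 y2k; lia.
Qed.

Section WrapAround.
Hypotheses (n3k : n + 1 = 3 * k) (k3 : 3 <= k).

Let in_sigma'' (i w : 'I_n) : (w \in sigma'' n k i) = sigma''_offsets k (offset n i w).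
Proof. by rewrite (mem_sigma'' n_gt0) ?ltn_ord //; lia. Qed.

Lemma window_sub_sigma''_y : (o z = 1 /\ o y = 2 * k) \/ (o z = 0 /\ o y = 2 * k - 1) ->
  s \subset sigma'' n k y.
Proof.
move=> ends; apply: (window_sub (in_sigma'' y)) => w ws m mn.
have [/andP [zw wy] wn zw' wy'] := window_mem ws.
by rewrite /sigma''_offsets; lia.
Qed.

Lemma window_sub_sigma''_x u : o z = 0 -> o y = 2 * k -> u \in s -> o u = 1 ->
  s \subset sigma'' n k x.
Proof.
move=> z0 y2k us u1; apply: (window_sub (in_sigma'' x)) => w ws m mn.
rewrite /sigma''_offsets (window_offset_x hw).
have [/andP [zw wy] wn zw' wy'] := window_mem ws.
case: (posnP (o w)) => [-> | w0]; first lia.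
have := window_close us ws; rewrite u1 => /(_ w0) uw.
by move: zw wy zw' wy'; rewrite z0 y2k; lia.
Qed.

Lemma window_sub_sigma''_z : o z = 0 -> o y = 2 * k ->
  (forall u, u \in s -> o u != 1) -> s \subset sigma'' n k z.
Proof.
move=> z0 y2k no1; apply: (window_sub (in_sigma'' z)) => w ws m mn.
have [/andP [zw wy] wn zw' wy'] := window_mem ws; have := no1 w ws.
by move: zw wy zw' wy'; rewrite /sigma''_offsets z0 y2k; lia.
Qed.

Lemma window_sub_sigma'' : o z + k < o y -> exists i : 'I_n, s \subset sigma'' n k i.
Proof.
move=> wrap; have := window_wrap wrap; have [zk ky y2k] := window_bounds => {}wrap.
have [ends | [z0 {}y2k]] :
    ((o z = 1 /\ o y = 2 * k) \/ (o z = 0 /\ o y = 2 * k - 1)) \/ (o z = 0 /\ o y = 2 * k)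
  by lia.
  by exists y; apply: window_sub_sigma''_y.
case: (boolP [exists u in s, o u == 1]) => [/exists_inP [u us /eqP u1] | /exists_inPn no1].
  by exists x; apply: window_sub_sigma''_x us u1.
by exists z; apply: window_sub_sigma''_z.
Qed.

End WrapAround.

End Window.

Section Cover.
Variables (n k : nat) (s : {set 'I_n}).
Hypotheses (hn : 0 < n) (hs : vr_simplex k s).

Lemma simplex_sub_sigma : 3 * k < n -> exists i : 'I_n, s \subset sigma n k i.
Proof.
move=> n3k; have kn : k < n by lia.
have [c [x [z [y hw]]]] := simplex_window kn hs.
have [zk ky y2k] := window_bounds hs hw.
case: (leqP (offset n c y) (offset n c z + k)) => span.
  by exists z; apply: window_sub_sigma hs hw kn span.
by have := window_wrap hs hw span; lia.
Qed.

Lemma simplex_sub_sigma_sigma' : n = 3 * k ->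
  exists i : 'I_n, s \subset sigma n k i \/ s \subset sigma' n k i.
Proof.
move=> n3k; have kn : k < n by lia.
have [c [x [z [y hw]]]] := simplex_window kn hs.
case: (leqP (offset n c y) (offset n c z + k)) => span; exists z.
  by left; apply: window_sub_sigma hs hw kn _; lia.
by right; apply: window_sub_sigma' hs hw n3k span.
Qed.

Lemma simplex_sub_sigma_sigma'' : n = 3 * k - 1 -> 3 <= k ->
  exists i : 'I_n, s \subset sigma n k i \/ s \subset sigma'' n k i.
Proof.
move=> n3k k3; have kn : k < n by lia.
have [c [x [z [y hw]]]] := simplex_window kn hs.
case: (leqP (offset n c y) (offset n c z + k)) => span.
  by exists z; left; apply: window_sub_sigma hs hw kn _; lia.
have [i si] := window_sub_sigma'' hs hw (ltac:(lia) : n + 1 = 3 * k) k3 span.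
by exists i; right.
Qed.

End Cover.

Lemma maximal_iff_cover n k (F : {set 'I_n} -> Prop) :
  (forall t, F t -> vr_maximal k t) ->
  (forall s, vr_simplex k s -> exists2 t, F t & s \subset t) ->
  forall s, vr_maximal k s <-> F s.
Proof.
move=> Fmax Fcover s; split=> [smax | /Fmax //].
have [t Ft st] : exists2 t, F t & s \subset t by apply/Fcover; case/maximalP: smax.
by rewrite (maximal_subset_eq smax _ st) //; case/maximalP: (Fmax t Ft).
Qed.

Theorem lemmaA1 (n k : nat) (hn : 0 < n) :
  (3 * k < n ->
     forall s : {set 'I_n}, vr_maximal k s <->
       exists2 i, i < n & s = sigma n k i)
  /\ (n = 3 * k -> 2 <= k ->
     forall s : {set 'I_n}, vr_maximal k s <->
       exists2 i, i < n & (s = sigma n k i \/ s = sigma' n k i))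
  /\ (n = 3 * k - 1 -> 3 <= k ->
     forall s : {set 'I_n}, vr_maximal k s <->
       exists2 i, i < n & (s = sigma n k i \/ s = sigma'' n k i)).
Proof.
split; [move=> n3k | split=> [n3k k2 | n3k k3]]; apply: maximal_iff_cover.
- by move=> _ [i hi ->]; apply: sigma_maximal => //; lia.
- move=> s /(simplex_sub_sigma hn)/(_ n3k) [i si].
  by exists (sigma n k i) => //; exists i.
- move=> _ [i hi [->|->]]; first by apply: sigma_maximal => //; lia.
  exact: sigma'_maximal.
- move=> s /(simplex_sub_sigma_sigma' hn)/(_ n3k) [i [si | si]].
    by exists (sigma n k i) => //; exists i => //; left.
  by exists (sigma' n k i) => //; exists i => //; right.
- move=> _ [i hi [->|->]]; first by apply: sigma_maximal => //; lia.
  exact: sigma''_maximal.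
- move=> s /(simplex_sub_sigma_sigma'' hn)/(_ n3k k3) [i [si | si]].
    by exists (sigma n k i) => //; exists i => //; left.
  by exists (sigma'' n k i) => //; exists i => //; right.
Qed.
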